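(* Consider a discounted MDP with finite state space $\mathcal{S}$, finite action space $\mathcal{A}$, transition matrix $P\in\mathbb{R}_+^{|\mathcal{S}||\mathcal{A}|\times|\mathcal{S}|}$ with $P_{sa,\tilde s}=\Pr(\tilde s\mid s,a)$, initial state distribution $\mu_0$ and discount factor $\gamma\in[0,1)$, and a differentiable parametrized policy $\theta\mapsto\pi_\theta$ with $\theta\in\mathbb{R}^p$. Let $\Upsilon\in\mathbb{R}^{p\times|\mathcal{S}||\mathcal{A}|}$ be the matrix $\Upsilon_{i,sa}=\partial d_\theta(s,a)/\partial\theta_i$. Then $$\Upsilon=H_\theta\,\Delta(\Xi^\top d_{\mathcal{S},\theta})\,\Psi_\theta^{-1},$$ where $\Psi_\theta=I-\gamma P\Pi_\theta$.
   Context: The policy $\pi_\theta\in\mathbb{R}_+^{|\mathcal{S}||\mathcal{A}|}$ has entries $\pi_\theta(s,a)$, normalized in each state. $\Pi_\theta\in\mathbb{R}^{|\mathcal{S}|\times|\mathcal{S}||\mathcal{A}|}$ is block-diagonal with row $s$ containing $\pi_\theta(s,\cdot)^\top$ in the block of state $s$, so $(\Pi_\theta v)(s)=\sum_a\pi_\theta(s,a)v(s,a)$. $d_\theta(s,a)=(1-\gamma)\sum_{i\ge0}\gamma^i\Pr(S_i=s,A_i=a)$ is the discounted state-action visitation distribution with $S_0\sim\mu_0$, actions from $\pi_\theta$ and transitions from $P$; $d_{\mathcal{S},\theta}(s)=\sum_a d_\theta(s,a)$. $H_\theta\in\mathbb{R}^{p\times|\mathcal{S}||\mathcal{A}|}$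 is the actor Jacobian $(H_\theta)_{i,sa}=\partial\pi_\theta(s,a)/\partial\theta_i$. $\Xi\in\mathbb{R}^{|\mathcal{S}|\times|\mathcal{S}||\mathcal{A}|}$ is the marginalization matrix (block-diagonal with blocks $\mathbf{1}_{|\mathcal{A}|}^\top$), so $\Xi^\top d_{\mathcal{S},\theta}$ is the vector with $(s,a)$-entry $d_{\mathcal{S},\theta}(s)$. $\Delta(v)$ is the diagonal matrix with $v$ on its diagonal. *)

From HB Require Import structures.
From mathcomp Require Import all_boot all_order all_algebra.
From mathcomp Require Import all_classical all_reals all_analysis.
Set Implicit Arguments. Unset Strict Implicit. Unset Printing Implicit Defensive.
Import Order.TTheory GRing.Theory Num.Theory.
Import numFieldNormedType.Exports.
Local Open Scope ring_scope.

(* Vectors/matrices indexed by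
   states (resp. state-action pairs) are MathComp matrices indexed by
   'I_#|S| (resp. 'I_#|{: S * A}|), an index i standing for enum_val i. *)

Section MDP.
Variables (R : realType) (S A : finType).

Notation nS := #|{: S}|.
Notation nSA := #|{: S * A}|.

Definition Pmx (P : S -> A -> S -> R) : 'M[R]_(nSA, nS) :=
  \matrix_(i, j) P (enum_val i).1 (enum_val i).2 (enum_val j).

Definition Pimx (pi : S -> A -> R) : 'M[R]_(nS, nSA) :=
  \matrix_(i, j) (if (enum_val j).1 == enum_val i
                  then pi (enum_val j).1 (enum_val j).2 else 0).

Definition Ximx : 'M[R]_(nS, nSA) :=
  \matrix_(i, j) ((enum_val j).1 == enum_val i)%:R.

Definition Psimx (gamma : R) (P : S -> A -> S -> R) (pi : S -> A -> R)
  : 'M[R]_nSA := 1%:M - gamma *: (Pmx P *m Pimx pi).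

(* Row vector of Pr(S_k = s, A_k = a), with S_0 ~ mu0, A_k ~ pi(S_k, .),
   S_{k+1} ~ P(S_k, A_k, .). *)
Fixpoint occ_row (mu0 : S -> R) (P : S -> A -> S -> R) (pi : S -> A -> R)
  (k : nat) : 'rV[R]_nSA :=
  match k with
  | 0 => \row_j (mu0 (enum_val j).1 * pi (enum_val j).1 (enum_val j).2)
  | k'.+1 => occ_row mu0 P pi k' *m Pmx P *m Pimx pi
  end.

Definition prob_sa (mu0 : S -> R) (P : S -> A -> S -> R) (pi : S -> A -> R)
  (k : nat) (s : S) (a : A) : R :=
  occ_row mu0 P pi k 0 (enum_rank (s, a)).

Definition dvis (gamma : R) (mu0 : S -> R) (P : S -> A -> S -> R)
  (pi : S -> A -> R) (s : S) (a : A) : R :=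
  (1 - gamma) * limn (fun n => \sum_(0 <= k < n) gamma ^+ k * prob_sa mu0 P pi k s a).

Definition dvec gamma mu0 P pi : 'cV[R]_nSA :=
  \col_i dvis gamma mu0 P pi (enum_val i).1 (enum_val i).2.

Definition dSvec gamma mu0 P pi : 'cV[R]_nS :=
  \col_i \sum_(a : A) dvis gamma mu0 P pi (enum_val i) a.

Definition Delta n (v : 'cV[R]_n) : 'M[R]_n := diag_mx v^T.

Definition Hmx p (pol : 'rV[R]_p -> S -> A -> R) (th : 'rV[R]_p)
  : 'M[R]_(p, nSA) :=
  \matrix_(i, j) 'D_(delta_mx 0 i)
     (fun t : 'rV[R]_p => pol t (enum_val j).1 (enum_val j).2) th.

Definition Upsmx p gamma mu0 P (pol : 'rV[R]_p -> S -> A -> R) (th : 'rV[R]_p)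
  : 'M[R]_(p, nSA) :=
  \matrix_(i, j) 'D_(delta_mx 0 i)
     (fun t : 'rV[R]_p => dvis gamma mu0 P (pol t) (enum_val j).1 (enum_val j).2) th.

End MDP.

(* Write d_theta as the row vector d = (1 - gamma) mu0 Pi Psi^-1.  Psi = I - gamma P Pi
   is invertible because P Pi is stochastic, so that |x Psi|_1 >= (1 - gamma) |x|_1.
   Differentiating d Psi = (1 - gamma) mu0 Pi along a direction gives
   d' Psi = w Pi' with w = (1 - gamma) mu0 + gamma d P, and the same identity read as
   d = w Pi shows that w is the state marginal d_S.  No derivative of Psi^-1 is
   needed: the uniform l1 lower bound on Psi lets the difference quotients of d pass
   to the limit. *)

From HB Require Import structures.
From mathcomp Require Import all_boot all_order all_algebra.
From mathcomp Require Import all_classical all_reals all_analysis.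
From mathcomp Require Import lra.
Import Order.TTheory GRing.Theory Num.Theory.
Import numFieldNormedType.Exports.
Set Implicit Arguments. Unset Strict Implicit. Unset Printing Implicit Defensive.
Local Open Scope classical_set_scope.
Local Open Scope ring_scope.

Section StochasticResolvent.
Variable R : realFieldType.

Definition l1norm n (x : 'rV[R]_n) : R := \sum_j `|x 0 j|.

Definition stochastic n (M : 'M[R]_n) :=
  (forall i j, 0 <= M i j) /\ (forall i, \sum_j M i j = 1).

Lemma l1norm_ge0 n (x : 'rV[R]_n) : 0 <= l1norm x.
Proof. exact: sumr_ge0. Qed.

Lemma l1normD n (x y : 'rV[R]_n) : l1norm (x + y) <= l1norm x + l1norm y.
Proof. by rewrite -big_split; apply: ler_sum => j _; rewrite mxE ler_normD. Qed.

Lemma l1normZ n c (x : 'rV[R]_n) : l1norm (c *: x) = `|c| * l1norm x.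
Proof. by rewrite mulr_sumr; apply: eq_bigr => j _; rewrite mxE normrM. Qed.

Lemma ler_norm_l1norm n (x : 'rV[R]_n) j : `|x 0 j| <= l1norm x.
Proof. by rewrite /l1norm (bigD1 j) //= lerDl sumr_ge0. Qed.

Lemma l1norm_le0 n (x : 'rV[R]_n) : l1norm x <= 0 -> x = 0.
Proof.
move=> x_le0; apply/rowP => j; rewrite mxE; apply/normr0_eq0/le_anti.
by rewrite normr_ge0 (le_trans (ler_norm_l1norm x j)).
Qed.

Lemma l1norm_mul_stochastic n (x : 'rV[R]_n) M :
  stochastic M -> l1norm (x *m M) <= l1norm x.
Proof.
case=> M_ge0 M_sum1.
apply: (@le_trans _ _ (\sum_j \sum_i `|x 0 i| * M i j)).
  apply: ler_sum => j _; rewrite mxE (le_trans (ler_norm_sum _ _ _)) //.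
  by apply: ler_sum => i _; rewrite normrM (ger0_norm (M_ge0 _ _)).
rewrite exchange_big; apply: ler_sum => i _.
by rewrite -mulr_sumr M_sum1 mulr1.
Qed.

Lemma l1norm_mul_resolvent n g (M : 'M[R]_n) x : 0 <= g -> stochastic M ->
  (1 - g) * l1norm x <= l1norm (x *m (1%:M - g *: M)).
Proof.
move=> g_ge0 stochM.
rewrite mulmxBr mulmx1 -scalemxAr.
have := l1normD (x - g *: (x *m M)) (g *: (x *m M)).
rewrite subrK l1normZ ger0_norm //.
have : g * l1norm (x *m M) <= g * l1norm x.
  by rewrite ler_wpM2l // l1norm_mul_stochastic.
lra.
Qed.

Lemma resolvent_unitmx n g (M : 'M[R]_n) : 0 <= g -> g < 1 -> stochastic M ->
  (1%:M - g *: M) \in unitmx.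
Proof.
move=> g_ge0 g_lt1 stochM; rewrite -row_free_unit -kermx_eq0.
apply/eqP/row_matrixP => i; rewrite row0.
set x := row i _; have xK : x *m (1%:M - g *: M) = 0.
  by apply/sub_kermxP; exact: row_sub.
apply: l1norm_le0.
have := l1norm_mul_resolvent x g_ge0 stochM.
have l1norm0 : l1norm (0 : 'rV[R]_n) = 0 by rewrite -(scale0r 0) l1normZ normr0 mul0r.
rewrite xK l1norm0; have := l1norm_ge0 x; nra.
Qed.

Lemma mulmx_resolvent_sum n g (M : 'M[R]_n) (u : nat -> 'rV[R]_n) :
  (forall k, u k.+1 = u k *m M) -> forall N,
  (\sum_(0 <= k < N) g ^+ k *: u k) *m (1%:M - g *: M) = u 0%N - g ^+ N *: u N.
Proof.
move=> uS; elim=> [|N IHN]; first by rewrite big_geq // mul0mx expr0 scale1r subrr.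
rewrite big_nat_recr //= mulmxDl IHN mulmxBr mulmx1 -scalemxAr -scalemxAl -uS.
by rewrite scalerA -exprS addrA subrK.
Qed.

End StochasticResolvent.

Section ResolventLimits.
Variable R : realType.

Lemma norm_le_cvg0 {T} {F : set_system T} {FF : Filter F} (f g : T -> R) :
  (forall t, `|f t| <= g t) -> g @ F --> 0 -> f @ F --> 0.
Proof.
move=> f_le g0; apply: (@squeeze_cvgr _ _ _ _ (fun t => - g t) g) => //.
- by apply: nearW => t; rewrite -ler_norml.
- by rewrite -oppr0; apply: cvgN.
Qed.

Lemma cvg_sumr {T} {F : set_system T} {FF : Filter F} (I : finType)
  (f : I -> T -> R) (l : I -> R) :
  (forall i, f i @ F --> l i) -> \sum_i f i t @[t --> F] --> \sum_i l i.
Proof.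
by move=> fl; exact: (cvg_big (P := xpredT) add_continuous _ (fun i _ => fl i)).
Qed.

Lemma cvg_mulmx_entry {T} {F : set_system T} {FF : Filter F} m n p
  (A : 'M[R]_(m, n)) (B : T -> 'M[R]_(n, p)) (B0 : 'M[R]_(n, p)) :
  (forall k l, B t k l @[t --> F] --> B0 k l) ->
  forall i j, (A *m B t) i j @[t --> F] --> (A *m B0) i j.
Proof.
move=> BB0 i j; rewrite mxE.
have -> : (fun t => (A *m B t) i j) = (fun t => \sum_k A i k * B t k j).
  by apply: funext => t; rewrite mxE.
by apply: cvg_sumr => k; apply: cvgMl_tmp.
Qed.

Lemma cvg_l1norm0 {T} {F : set_system T} {FF : Filter F} n (x : T -> 'rV[R]_n) :
  (forall j, x t 0 j @[t --> F] --> 0) -> l1norm (x t) @[t --> F] --> 0.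
Proof.
move=> x0; have sum0 : \sum_(j < n) (0 : R) = 0 by rewrite big1.
rewrite -[X in _ --> X]sum0.
by apply: cvg_sumr => j; rewrite -(normr0 R); apply: cvg_norm.
Qed.

Lemma cvg_resolvent_series n g (M : 'M[R]_n) (u : nat -> 'rV[R]_n) j :
  0 <= g -> g < 1 -> stochastic M -> (forall k, u k.+1 = u k *m M) ->
  \sum_(0 <= k < N) g ^+ k * u k 0 j @[N --> \oo]
    --> (u 0%N *m invmx (1%:M - g *: M)) 0 j.
Proof.
move=> g_ge0 g_lt1 stochM uS.
set Psi := 1%:M - g *: M.
have Psi_unit : Psi \in unitmx by exact: resolvent_unitmx.
have u_bounded k : l1norm (u k) <= l1norm (u 0%N).
  elim: k => // k IHk; rewrite uS; exact: le_trans (l1norm_mul_stochastic _ _) IHk.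
have partial_sumE N : \sum_(0 <= k < N) g ^+ k * u k 0 j
    = (u 0%N *m invmx Psi) 0 j - g ^+ N * (u N *m invmx Psi) 0 j.
  have sumE : \sum_(0 <= k < N) g ^+ k *: u k = (u 0%N - g ^+ N *: u N) *m invmx Psi.
    by rewrite -(mulmx_resolvent_sum g uS N) mulmxK.
  transitivity ((\sum_(0 <= k < N) g ^+ k *: u k) 0 j).
    by rewrite summxE; apply: eq_bigr => k _; rewrite mxE.
  by rewrite sumE mulmxBl -scalemxAl !mxE.
rewrite (funext partial_sumE).
rewrite -[X in _ --> X]subr0; apply: cvgB; first exact: cvg_cst.
apply: (@norm_le_cvg0 _ _ _ _ (fun N => g ^+ N * (l1norm (u 0%N) / (1 - g)))).
  move=> N; rewrite normrM ger0_norm ?exprn_ge0 // ler_wpM2l ?exprn_ge0 //.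
  apply: le_trans (ler_norm_l1norm _ _) _.
  rewrite ler_pdivlMr ?subr_gt0 // mulrC.
  apply: le_trans (l1norm_mul_resolvent _ g_ge0 stochM) _.
  by rewrite -/Psi mulmxKV.
rewrite -(mul0r (l1norm (u 0%N) / (1 - g))); apply: cvgMr_tmp.
by apply: cvg_expr; rewrite ger0_norm.
Qed.

Lemma cvg_coercive_solution {T} {F : set_system T} {FF : Filter F} n c
  (Psi : T -> 'M[R]_n) (Psi0 : 'M[R]_n) (X : T -> 'rV[R]_n) (q : 'rV[R]_n) :
  0 < c -> (forall t x, c * l1norm x <= l1norm (x *m Psi t)) ->
  (forall k l, Psi t k l @[t --> F] --> Psi0 k l) ->
  (forall k, (X t *m Psi t) 0 k @[t --> F] --> (q *m Psi0) 0 k) ->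
  forall j, X t 0 j @[t --> F] --> q 0 j.
Proof.
move=> c_gt0 coercive PsiPsi0 XPsi j.
have residual0 k : ((X t - q) *m Psi t) 0 k @[t --> F] --> 0.
  rewrite -(subrr ((q *m Psi0) 0 k)).
  have -> : (fun t => ((X t - q) *m Psi t) 0 k)
      = (fun t => (X t *m Psi t) 0 k - (q *m Psi t) 0 k).
    by apply: funext => t; rewrite mulmxBl mxE [in X in _ + X]mxE.
  apply: cvgB; [exact: XPsi | exact: cvg_mulmx_entry].
apply/subr_cvg0.
apply: (@norm_le_cvg0 _ _ _ _ (fun t => l1norm ((X t - q) *m Psi t) / c)).
  move=> t; rewrite ler_pdivlMr // mulrC; apply: le_trans (coercive t _).
  apply: ler_wpM2l; first exact: ltW.
  by have := ler_norm_l1norm (X t - q) j; rewrite !mxE.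
by rewrite -(mul0r c^-1); apply: cvgMr_tmp; exact: cvg_l1norm0.
Qed.

Lemma dquotient_cvg_continuous (f : R -> R) (a L : R) :
  h^-1 * (f h - a) @[h --> (0 : R)^'] --> L -> f h @[h --> (0 : R)^'] --> a.
Proof.
move=> fL; apply/subr_cvg0.
have id0 : h @[h --> (0 : R)^'] --> (0 : R).
  exact: cvg_trans (cvg_within _) cvg_id.
have vanish : h * (h^-1 * (f h - a)) @[h --> (0 : R)^'] --> 0.
  by rewrite -[X in _ --> X](mul0r L); exact: cvgM.
apply: (cvg_trans _ vanish); apply: near_eq_cvg.
near=> h; rewrite mulrA mulfV ?mul1r //.
by near: h; exact: nbhs_dnbhs_neq.
Unshelve. all: by end_near. Qed.

Lemma dquotient_is_derive (V : normedModType R) (f : V -> R) (a v : V) (l : R) :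
  h^-1 * (f (h *: v + a) - f a) @[h --> (0 : R)^'] --> l -> is_derive a v f l.
Proof. by move=> fl; split; [exact: cvgP fl | exact: cvg_lim fl]. Qed.

End ResolventLimits.

Section Occupancy.
Variables (R : realFieldType) (m n : nat) (g : R) (mu : 'rV[R]_m) (P : 'M[R]_(n, m)).
Hypotheses (g_ge0 : 0 <= g) (g_lt1 : g < 1).

Definition occupancy (Pi : 'M[R]_(m, n)) : 'rV[R]_n :=
  (1 - g) *: (mu *m Pi) *m invmx (1%:M - g *: (P *m Pi)).

Definition state_occupancy (Pi : 'M[R]_(m, n)) : 'rV[R]_m :=
  (1 - g) *: mu + g *: (occupancy Pi *m P).

Lemma occupancy_resolvent Pi : stochastic (P *m Pi) ->
  occupancy Pi *m (1%:M - g *: (P *m Pi)) = (1 - g) *: (mu *m Pi).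
Proof. by move=> stochPi; rewrite mulmxKV // resolvent_unitmx. Qed.

Lemma occupancy_state Pi : stochastic (P *m Pi) ->
  occupancy Pi = state_occupancy Pi *m Pi.
Proof.
move=> stochPi; have := occupancy_resolvent stochPi.
rewrite mulmxBr mulmx1 -scalemxAr => occE.
by rewrite mulmxDl -!scalemxAl -mulmxA -occE subrK.
Qed.

Lemma occupancy_sub_mul_resolvent Pi Pi0 :
  stochastic (P *m Pi) -> stochastic (P *m Pi0) ->
  (occupancy Pi - occupancy Pi0) *m (1%:M - g *: (P *m Pi))
    = state_occupancy Pi0 *m (Pi - Pi0).
Proof.
move=> stochPi stochPi0.
rewrite mulmxBl occupancy_resolvent // [in RHS]mulmxBr -occupancy_state //.
rewrite mulmxBr mulmx1 -scalemxAr mulmxDl -!scalemxAl mulmxA.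
by rewrite opprB addrA.
Qed.

End Occupancy.

Lemma occupancy_dquotient_cvg (R : realType) m n (g : R) (mu : 'rV[R]_m)
    (P : 'M[R]_(n, m)) (Pi : R -> 'M[R]_(m, n)) (Pi0 dPi : 'M[R]_(m, n)) :
  0 <= g -> g < 1 ->
  (forall h, stochastic (P *m Pi h)) -> stochastic (P *m Pi0) ->
  (forall k l, h^-1 * (Pi h k l - Pi0 k l) @[h --> (0 : R)^'] --> dPi k l) ->
  forall j, h^-1 * (occupancy g mu P (Pi h) 0 j - occupancy g mu P Pi0 0 j)
      @[h --> (0 : R)^']
    --> (state_occupancy g mu P Pi0 *m dPi *m invmx (1%:M - g *: (P *m Pi0))) 0 j.
Proof.
move=> g_ge0 g_lt1 stochPi stochPi0 dPiP j.
set Psi0 := 1%:M - g *: (P *m Pi0).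
have Psi0_unit : Psi0 \in unitmx by exact: resolvent_unitmx.
have Pi_cvg k l : Pi h k l @[h --> (0 : R)^'] --> Pi0 k l.
  exact: dquotient_cvg_continuous (dPiP k l).
have -> : (fun h => h^-1 * (occupancy g mu P (Pi h) 0 j - occupancy g mu P Pi0 0 j))
    = (fun h => (h^-1 *: (occupancy g mu P (Pi h) - occupancy g mu P Pi0)) 0 j).
  apply: funext => h; rewrite [RHS]mxE; congr (_ * _).
  by rewrite [RHS]mxE; congr (_ + _); rewrite [RHS]mxE.
apply: (@cvg_coercive_solution R R (0 : R)^' _ n (1 - g)
  (fun h => 1%:M - g *: (P *m Pi h)) Psi0).
- by rewrite subr_gt0.
- by move=> h x; exact: l1norm_mul_resolvent.
- move=> k l.
  have resolventE (M : 'M[R]_n) : (1%:M - g *: M) k l = 1%:M k l - g * M k l.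
    by rewrite !mxE.
  rewrite /Psi0 resolventE; under eq_cvg do rewrite resolventE.
  apply: cvgB; first exact: cvg_cst.
  by apply: cvgMl_tmp; exact: cvg_mulmx_entry.
- move=> k; rewrite mulmxKV //.
  under eq_cvg do rewrite -scalemxAl occupancy_sub_mul_resolvent // scalemxAr.
  apply: cvg_mulmx_entry => k' l.
  under eq_cvg do rewrite !mxE; exact: dPiP.
Qed.

Section MDP.
Variables (R : realType) (S A : finType).
Variables (P : S -> A -> S -> R) (mu0 : S -> R) (gamma : R).
Hypotheses (P_ge0 : forall s a s', 0 <= P s a s')
  (P_sum1 : forall s a, \sum_(s' : S) P s a s' = 1).
Hypotheses (gamma_ge0 : 0 <= gamma) (gamma_lt1 : gamma < 1).

Local Notation nS := #|{: S}|.
Local Notation nSA := #|{: S * A}|.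

Definition policy (pi : S -> A -> R) :=
  (forall s a, 0 <= pi s a) /\ (forall s, \sum_a pi s a = 1).

Definition murow : 'rV[R]_nS := \row_i mu0 (enum_val i).

Local Notation occupancy_of pi := (occupancy gamma murow (Pmx P) (Pimx pi)).
Local Notation state_occupancy_of pi :=
  (state_occupancy gamma murow (Pmx P) (Pimx pi)).

Lemma sum_enum_val_eq (T : finType) (f : 'I_#|T| -> R) (x : T) :
  \sum_i (if x == enum_val i then f i else 0) = f (enum_rank x).
Proof.
rewrite (bigD1 (enum_rank x)) //= enum_rankK eqxx big1 ?addr0 // => i i_neq.
by case: eqP => // x_eq; move: i_neq; rewrite x_eq enum_valK eqxx.
Qed.

Lemma mulmx_Pimx (w : 'rV[R]_nS) (pi : S -> A -> R) j :
  (w *m Pimx pi) 0 j = w 0 (enum_rank (enum_val j).1) * pi (enum_val j).1 (enum_val j).2.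
Proof.
rewrite mxE -(sum_enum_val_eq (fun i => w 0 i * pi _ _)).
by apply: eq_bigr => i _; rewrite mxE; case: ifP; rewrite ?mulr0.
Qed.

Lemma mulmx_trXimx (v : 'cV[R]_nS) j :
  ((Ximx R S A)^T *m v) j 0 = v (enum_rank (enum_val j).1) 0.
Proof.
rewrite mxE -(sum_enum_val_eq (fun i => v i 0)).
by apply: eq_bigr => i _; rewrite !mxE; case: ifP; rewrite ?mul1r ?mul0r.
Qed.

Lemma stochastic_PPimx pi : policy pi -> stochastic (Pmx P *m Pimx pi).
Proof.
case=> pi_ge0 pi_sum1; split=> [i j|i].
  by rewrite mxE; apply: sumr_ge0 => k _; rewrite !mxE mulr_ge0 //; case: ifP.
rewrite (eq_bigr _ (fun j _ => mxE _ _ _ _)) exchange_big /=.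
have Pimx_sum1 k : \sum_j Pimx pi k j = 1.
  rewrite (eq_bigr _ (fun j _ => mxE _ _ _ _)) /=.
  rewrite -(big_enum_val (fun x : S * A => if x.1 == enum_val k then pi x.1 x.2 else 0)).
  rewrite -(pair_big xpredT xpredT (fun s a => if s == enum_val k then pi s a else 0)).
  rewrite (bigD1 (enum_val k)) //= eqxx pi_sum1 big1 ?addr0 // => s /negbTE s_neq.
  by rewrite big1 // => a _; rewrite s_neq.
under eq_bigr do rewrite -mulr_sumr Pimx_sum1 mulr1 mxE.
by rewrite -(big_enum_val (P (enum_val i).1 (enum_val i).2)) P_sum1.
Qed.

Lemma occ_row0 pi : occ_row mu0 P pi 0 = murow *m Pimx pi.
Proof. by apply/rowP => j; rewrite mulmx_Pimx !mxE enum_rankK. Qed.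

Lemma dvisE pi s a : policy pi ->
  dvis gamma mu0 P pi s a = occupancy_of pi 0 (enum_rank (s, a)).
Proof.
move=> pol_pi; rewrite /dvis /occupancy -scalemxAl [RHS]mxE -occ_row0.
congr (_ * _); apply: cvg_lim => //.
apply: cvg_resolvent_series => //; first exact: stochastic_PPimx.
by move=> k; rewrite /= mulmxA.
Qed.

Lemma sum_dvis pi s : policy pi ->
  \sum_a dvis gamma mu0 P pi s a = state_occupancy_of pi 0 (enum_rank s).
Proof.
move=> pol_pi; have [_ pi_sum1] := pol_pi.
have occE := occupancy_state murow gamma_ge0 gamma_lt1 (stochastic_PPimx pol_pi).
under eq_bigr do rewrite dvisE // occE.
under eq_bigr do rewrite mulmx_Pimx enum_rankK /=.
by rewrite -mulr_sumr pi_sum1 mulr1.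
Qed.

Lemma dSvecE pi : policy pi -> dSvec gamma mu0 P pi = (state_occupancy_of pi)^T.
Proof.
by move=> pol_pi; apply/colP => k; rewrite [LHS]mxE [RHS]mxE sum_dvis // enum_valK.
Qed.

Variables (p : nat) (pol : 'rV[R]_p -> S -> A -> R).

Lemma row_Hmx_Delta th (w : 'rV[R]_nS) i :
  row i (Hmx pol th *m Delta ((Ximx R S A)^T *m w^T))
    = w *m Pimx (fun s a => 'D_(delta_mx 0 i) (fun t => pol t s a) th).
Proof.
apply/rowP => j; rewrite mxE /Delta mul_mx_diag mxE mulmx_Pimx mulrC.
by rewrite [Hmx _ _ _ _]mxE mxE mulmx_trXimx mxE.
Qed.

Lemma is_derive_dvis th v s a :
  (forall t, policy (pol t)) ->
  (forall s a, derivable (fun t => pol t s a) th v) ->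
  is_derive th v (fun t => dvis gamma mu0 P (pol t) s a)
    ((state_occupancy_of (pol th) *m Pimx (fun s a => 'D_v (fun t => pol t s a) th)
       *m invmx (Psimx gamma P (pol th))) 0 (enum_rank (s, a))).
Proof.
move=> pol_policy dpol; apply: dquotient_is_derive.
under eq_cvg do rewrite !dvisE //.
apply: occupancy_dquotient_cvg => // [h||k l]; try exact: stochastic_PPimx.
set c := (enum_val l).1 == enum_val k.
have -> : (fun h => h^-1 * (Pimx (pol (h *: v + th)) k l - Pimx (pol th) k l))
    = (fun h => if c then h^-1 * (pol (h *: v + th) (enum_val l).1 (enum_val l).2
                                  - pol th (enum_val l).1 (enum_val l).2) else 0).
  by apply: funext => h; rewrite !mxE -/c; case: c; rewrite ?subrr ?mulr0.
by rewrite mxE -/c; case: c; [exact: dpol | exact: cvg_cst].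
Qed.

End MDP.

Theorem theorem2 (R : realType) (S A : finType) (p : nat)
  (P : S -> A -> S -> R) (mu0 : S -> R) (gamma : R)
  (pol : 'rV[R]_p -> S -> A -> R) (th : 'rV[R]_p) :
  (forall s a s', 0 <= P s a s') ->
  (forall s a, \sum_(s' : S) P s a s' = 1) ->
  (forall s, 0 <= mu0 s) ->
  \sum_(s : S) mu0 s = 1 ->
  0 <= gamma -> gamma < 1 ->
  (forall t s a, 0 <= pol t s a) ->
  (forall t s, \sum_(a : A) pol t s a = 1) ->
  (forall t s a, differentiable (fun t' : 'rV[R]_p => pol t' s a) t) ->
  Psimx gamma P (pol th) \in unitmx /\
  (forall (i : 'I_p) s a,
     derivable (fun t : 'rV[R]_p => dvis gamma mu0 P (pol t) s a) th (delta_mx 0 i)) /\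
  Upsmx gamma mu0 P pol th =
    Hmx pol th
    *m Delta ((Ximx R S A)^T *m dSvec gamma mu0 P (pol th))
    *m invmx (Psimx gamma P (pol th)).
Proof.
(* [mu0] need not be a distribution: everything is linear in it. *)
move=> P_ge0 P_sum1 _ _ g_ge0 g_lt1 pol_ge0 pol_sum1 pol_diff.
have pol_policy t : policy (pol t) by [].
have dvis_derive (i : 'I_p) s a := is_derive_dvis mu0 P_ge0 P_sum1 g_ge0 g_lt1 s a
  pol_policy (fun s a => diff_derivable (v := delta_mx 0 i) (pol_diff th s a)).
split; first exact/resolvent_unitmx/stochastic_PPimx.
split=> [i s a|]; first exact: ex_derive.
apply/row_matrixP => i; rewrite row_mul dSvecE // row_Hmx_Delta.
apply/rowP => j; rewrite [LHS]mxE [LHS]mxE.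
by rewrite (derive_val (is_derive := dvis_derive i _ _)) -surjective_pairing enum_valK.
Qed.
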